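(* Assume $\mu_n\to0$. Then $\hat\theta_A$ is uniformly consistent for $\theta$: for every $\varepsilon>0$, $$\lim_{n\to\infty}\sup_{\theta\in\mathbb R}P_{n,\theta}\big(|\hat\theta_A-\theta|>\varepsilon\big)=0.$$ Furthermore, with $a_n=\min(n^{1/2},\mu_n^{-1})$, for every $\varepsilon>0$ there exists a real $M\ge0$ such that $$\sup_{n\in\mathbb N}\sup_{\theta\in\mathbb R}P_{n,\theta}\big(a_n|\hat\theta_A-\theta|>M\big)<\varepsilon .$$
   Context: Gaussian location model: for each sample size $n$, $y_1,\dots,y_n$ are i.i.d. $N(\theta,1)$ with $\theta\in\mathbb R$ unknown; $\bar y$ is their mean. $P_{n,\theta}$ denotes the probability governing a sample of size $n$ when $\theta$ is the true parameter. Given a nonrandom tuning parameter $\mu_n>0$, the adaptive LASSO estimator is $\hat\theta_A=0$ if $|\bar y|\le\mu_n$ and $\hat\theta_A=\bar y-\mu_n^2/\bar y$ if $|\bar y|>\mu_n$. *)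

From Stdlib Require Import Reals Lra ClassicalEpsilon.
Open Scope R_scope.

(* Adaptive LASSO estimator as a function of the sample mean ybar. *)
Definition thetaA (mu ybar : R) : R :=
  if Rle_dec (Rabs ybar) mu then 0 else ybar - mu ^ 2 / ybar.

(* Density of ybar ~ N(theta, 1/n) (the mean of n iid N(theta,1)). *)
Definition ybar_density (n : nat) (theta y : R) : R :=
  sqrt (INR n / (2 * PI)) * exp (- (INR n * (y - theta) ^ 2) / 2).

Definition ind (A : R -> Prop) (y : R) : R :=
  match excluded_middle_informative (A y) with
  | left _ => 1 | right _ => 0 end.

Definition is_prob (n : nat) (theta : R) (A : R -> Prop) (p : R) : Prop :=
  forall eps, 0 < eps -> exists T0, forall T, T0 <= T ->
    exists pr : Riemann_integrable
                  (fun y => ybar_density n theta y * ind A y) (- T) T,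
      Rabs (RiemannInt pr - p) < eps.

(* P_{n,theta}(ybar in A); an arbitrary real if the integral does not exist. *)
Definition Prob (n : nat) (theta : R) (A : R -> Prop) : R :=
  epsilon (inhabits 0) (fun p => is_prob n theta A p).

Definition a_n (mu : nat -> R) (n : nat) : R := Rmin (sqrt (INR n)) (/ mu n).

(* The adaptive LASSO map [thetaA mu] is nondecreasing (it vanishes at +-mu, where the
   two branches meet) and moves [ybar] by at most [mu].  Monotonicity makes each event
   [c < |thetaA mu ybar - theta|] a union of two half-lines, so its probability exists as an
   improper Riemann integral; the displacement bound puts it inside a tail event of [ybar].
   On the tail [t < sqrt n |y - theta|] the N(theta, 1/n) density is dominated by a Laplace
   density, so such an event has probability at most [4 / t], uniformly in [theta].
   Consistency takes [t = sqrt n * eps / 2] once [mu n < eps / 2]; tightness uses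
   [a_n <= sqrt n] and [a_n * mu n <= 1] to take [t = M - 1]. *)

From Stdlib Require Import Reals Lra Lia ClassicalEpsilon Classical.
From Coquelicot Require Import Coquelicot.
Open Scope R_scope.

Lemma ind_in (A : R -> Prop) y : A y -> ind A y = 1.
Proof. intro Ay; unfold ind; destruct (excluded_middle_informative (A y)); tauto. Qed.

Lemma ind_out (A : R -> Prop) y : ~ A y -> ind A y = 0.
Proof. intro nAy; unfold ind; destruct (excluded_middle_informative (A y)); tauto. Qed.

Lemma ind_ext (A B : R -> Prop) y : (A y <-> B y) -> ind A y = ind B y.
Proof.
  intro AB; unfold ind.
  destruct (excluded_middle_informative (A y)), (excluded_middle_informative (B y)); tauto.
Qed.

Lemma ind_bounds (A : R -> Prop) y : 0 <= ind A y <= 1.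
Proof. unfold ind; destruct (excluded_middle_informative (A y)); lra. Qed.

Lemma sub_div_increasing m x y : 0 <= m -> x < y -> 0 < x * y -> x - m / x < y - m / y.
Proof.
  intros Hm Hxy Hxy0.
  assert (x <> 0) by (intro; subst; nra).
  assert (y <> 0) by (intro; subst; nra).
  assert (E : m / x - m / y = m * (y - x) / (x * y)) by (field; auto).
  assert (0 <= m * (y - x) / (x * y)).
  { apply Rmult_le_pos; [nra | left; apply Rinv_0_lt_compat; lra]. }
  lra.
Qed.

(* Outside the dead zone [thetaA] has the sign of [y], since y (y - mu^2/y) = y^2 - mu^2. *)
Lemma thetaA_nondecreasing mu x y : 0 < mu -> x <= y -> thetaA mu x <= thetaA mu y.
Proof.
  intros Hmu Hxy; unfold thetaA.
  assert (sign : forall z, mu < Rabs z -> z * (z - mu ^ 2 / z) = z ^ 2 - mu ^ 2).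
  { intros z Hz. assert (z <> 0) by (intro; subst; rewrite Rabs_R0 in Hz; lra). field; auto. }
  destruct (Rle_dec (Rabs x) mu) as [Hx|Hx], (Rle_dec (Rabs y) mu) as [Hy|Hy].
  - lra.
  - pose proof (sign y ltac:(lra)). revert Hx Hy; split_Rabs; intros; nra.
  - pose proof (sign x ltac:(lra)). revert Hx Hy; split_Rabs; intros; nra.
  - destruct (Req_dec x y) as [->|Hne]; [lra|].
    pose proof (sign x ltac:(lra)); pose proof (sign y ltac:(lra)).
    destruct (Rlt_dec 0 (x * y)).
    + left; apply sub_div_increasing; [nra | lra | auto].
    + assert (x < - mu /\ mu < y) as [Hx' Hy'] by (revert Hx Hy; split_Rabs; intros; nra).
      assert (x - mu ^ 2 / x < 0) by nra.
      assert (0 < y - mu ^ 2 / y) by nra.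
      lra.
Qed.

Lemma thetaA_dist_le mu y th : 0 < mu -> Rabs (thetaA mu y - th) <= Rabs (y - th) + mu.
Proof.
  intro Hmu; unfold thetaA.
  destruct (Rle_dec (Rabs y) mu) as [Hy|Hy].
  - revert Hy; split_Rabs; lra.
  - assert (y <> 0) by (intro; subst; rewrite Rabs_R0 in Hy; lra).
    assert (shrink : Rabs (mu ^ 2 / y) <= mu).
    { unfold Rdiv; rewrite Rabs_mult, Rabs_inv, (Rabs_right (mu ^ 2)) by nra.
      apply (Rmult_le_reg_r (Rabs y)); [lra|].
      rewrite Rmult_assoc, Rinv_l by lra. nra. }
    pose proof (Rabs_triang (y - th) (- (mu ^ 2 / y))).
    rewrite Rabs_Ropp in *.
    replace (y - mu ^ 2 / y - th) with (y - th + - (mu ^ 2 / y)) by ring. lra.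
Qed.

Definition upward_closed (U : R -> Prop) := forall x y, x <= y -> U x -> U y.

Lemma upward_closed_threshold U a b : upward_closed U -> a <= b ->
  exists l, a <= l <= b /\ (forall x, a < x < l -> ~ U x) /\ (forall x, l < x < b -> U x).
Proof.
  intros HU Hab.
  set (E := fun x => x = a \/ (a <= x <= b /\ ~ U x)).
  destruct (completeness E) as [l [Hub Hlub]].
  - exists b; intros x [->|[Hx _]]; lra.
  - exists a; now left.
  - assert (a <= l) by (apply Hub; now left).
    assert (l <= b) by (apply Hlub; intros x [->|[Hx _]]; lra).
    exists l; split; [lra|split].
    + intros x Hx Ux.
      assert (below : exists e, E e /\ x < e).
      { apply NNPP; intro none.
        assert (l <= x) by (apply Hlub; intros e Ee; apply Rnot_lt_le; eauto).
        lra. }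
      destruct below as [e [[->|[_ nUe]] Hxe]]; [lra|].
      apply nUe, (HU x); [lra|auto].
    + intros x Hx; apply NNPP; intro nUx.
      assert (x <= l) by (apply Hub; right; split; [lra|auto]).
      lra.
Qed.

Lemma ex_RInt_mult_ind_upward (f : R -> R) U a b : (forall x, continuous f x) ->
  upward_closed U -> a <= b -> ex_RInt (fun y => f y * ind U y) a b.
Proof.
  intros Hf HU Hab.
  destruct (upward_closed_threshold U a b HU Hab) as [l [Hl [below above]]].
  apply (ex_RInt_Chasles _ a l b).
  - apply (ex_RInt_ext (fun _ => 0)); [|apply (ex_RInt_const (V := R_NormedModule))].
    intros x Hx; rewrite Rmin_left, Rmax_right in Hx by lra.
    rewrite ind_out by (apply below; lra); now rewrite Rmult_0_r.
  - apply (ex_RInt_ext f).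
    + intros x Hx; rewrite Rmin_left, Rmax_right in Hx by lra.
      rewrite ind_in by (apply above; lra); now rewrite Rmult_1_r.
    + apply (ex_RInt_continuous (V := R_CompleteNormedModule)); auto.
Qed.

Lemma ex_RInt_mult_ind_abs_gt (f g : R -> R) c a b : (forall x, continuous f x) ->
  (forall x y, x <= y -> g x <= g y) -> 0 <= c -> a <= b ->
  ex_RInt (fun y => f y * ind (fun y => c < Rabs (g y)) y) a b.
Proof.
  intros Hf Hg Hc Hab.
  assert (split_ind : forall y, ind (fun y => c < Rabs (g y)) y =
    ind (fun y => c < g y) y + (1 - ind (fun y => - c <= g y) y)).
  { intro y; unfold ind.
    destruct (excluded_middle_informative (c < Rabs (g y))),
             (excluded_middle_informative (c < g y)),
             (excluded_middle_informative (- c <= g y)); split_Rabs; lra. }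
  apply (ex_RInt_ext (fun y => plus (f y * ind (fun y => c < g y) y)
                                     (minus (f y) (f y * ind (fun y => - c <= g y) y)))).
  - intros y _; rewrite split_ind; unfold minus, plus, opp; simpl; ring.
  - apply (ex_RInt_plus (V := R_NormedModule)); [|apply (ex_RInt_minus (V := R_NormedModule))].
    + apply ex_RInt_mult_ind_upward; auto.
      intros x y Hxy Hx; pose proof (Hg x y Hxy); lra.
    + apply (ex_RInt_continuous (V := R_CompleteNormedModule)); auto.
    + apply ex_RInt_mult_ind_upward; auto.
      intros x y Hxy Hx; pose proof (Hg x y Hxy); lra.
Qed.

Lemma exp_le x y : x <= y -> exp x <= exp y.
Proof. intros [Hlt| ->]; [left; apply exp_increasing |]; lra. Qed.

Lemma continuous_ybar_density n th y : continuous (ybar_density n th) y.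
Proof.
  apply (ex_derive_continuous (ybar_density n th)); unfold ybar_density.
  auto_derive; auto.
Qed.

Lemma continuous_exp_abs c th y : continuous (fun y => exp (- (c * Rabs (y - th)))) y.
Proof.
  apply continuous_exp_comp, (continuous_opp (fun y => c * Rabs (y - th))).
  apply (continuous_mult (fun _ => c) (fun y => Rabs (y - th))); [apply continuous_const|].
  apply continuous_Rabs_comp, (continuous_minus (fun y => y) (fun _ => th));
    [apply continuous_id | apply continuous_const].
Qed.

Lemma RInt_exp_affine k th a b : k <> 0 ->
  RInt (fun y => exp (k * (y - th))) a b = (exp (k * (b - th)) - exp (k * (a - th))) / k.
Proof.
  intro Hk; apply is_RInt_unique.
  replace ((exp (k * (b - th)) - exp (k * (a - th))) / k)
    with (minus (exp (k * (b - th)) / k) (exp (k * (a - th)) / k))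
    by (unfold minus, plus, opp; simpl; field; auto).
  apply (is_RInt_derive (fun y => exp (k * (y - th)) / k)).
  - intros x _; auto_derive; auto.
    replace (x + - th) with (x - th) by ring; field; auto.
  - intros x _; apply (ex_derive_continuous (fun y => exp (k * (y - th)))); auto_derive; auto.
Qed.

Lemma RInt_exp_abs_left c th a b : 0 < c -> a <= b -> b <= th ->
  RInt (fun y => exp (- (c * Rabs (y - th)))) a b <= 1 / c.
Proof.
  intros Hc Hab Hb.
  rewrite (RInt_ext _ (fun y => exp (c * (y - th)))).
  - rewrite RInt_exp_affine by lra.
    assert (exp (c * (b - th)) <= 1) by (rewrite <- exp_0; apply exp_le; nra).
    pose proof (exp_pos (c * (a - th))).
    apply Rmult_le_compat_r; [left; apply Rinv_0_lt_compat|]; lra.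
  - intros x Hx; rewrite Rmin_left, Rmax_right in Hx by lra.
    rewrite Rabs_left by lra; f_equal; ring.
Qed.

Lemma RInt_exp_abs_right c th a b : 0 < c -> a <= b -> th <= a ->
  RInt (fun y => exp (- (c * Rabs (y - th)))) a b <= 1 / c.
Proof.
  intros Hc Hab Ha.
  rewrite (RInt_ext _ (fun y => exp (- c * (y - th)))).
  - rewrite RInt_exp_affine by lra.
    assert (exp (- c * (a - th)) <= 1) by (rewrite <- exp_0; apply exp_le; nra).
    pose proof (exp_pos (- c * (b - th))).
    replace ((exp (- c * (b - th)) - exp (- c * (a - th))) / - c)
      with ((exp (- c * (a - th)) - exp (- c * (b - th))) / c) by (field; lra).
    apply Rmult_le_compat_r; [left; apply Rinv_0_lt_compat|]; lra.
  - intros x Hx; rewrite Rmin_left, Rmax_right in Hx by lra.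
    rewrite Rabs_right by lra; f_equal; ring.
Qed.

Lemma RInt_exp_abs_le c th a b : 0 < c -> a <= b ->
  RInt (fun y => exp (- (c * Rabs (y - th)))) a b <= 2 / c.
Proof.
  intros Hc Hab.
  assert (0 < 1 / c) by (apply Rdiv_lt_0_compat; lra).
  destruct (Rle_dec b th); [pose proof (RInt_exp_abs_left c th a b Hc Hab r); lra|].
  destruct (Rle_dec th a); [pose proof (RInt_exp_abs_right c th a b Hc Hab r); lra|].
  assert (I : forall u v, ex_RInt (fun y => exp (- (c * Rabs (y - th)))) u v).
  { intros u v; apply (ex_RInt_continuous (V := R_CompleteNormedModule)).
    intros; apply continuous_exp_abs. }
  rewrite <- (RInt_Chasles _ a th b) by apply I.
  pose proof (RInt_exp_abs_left c th a th Hc ltac:(lra) ltac:(lra)).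
  pose proof (RInt_exp_abs_right c th th b Hc ltac:(lra) ltac:(lra)).
  unfold plus; simpl; lra.
Qed.

Lemma RInt_symmetric_cv_of_bounded (h : R -> R) C :
  (forall y, 0 <= h y) -> (forall a b, a <= b -> ex_RInt h a b) ->
  (forall T, 0 <= T -> RInt h (- T) T <= C) ->
  exists p, forall eps, 0 < eps -> exists T0, 0 <= T0 /\
    forall T, T0 <= T -> Rabs (RInt h (- T) T - p) < eps.
Proof.
  intros Hpos Hint Hbound.
  set (F := fun T => RInt h (- T) T).
  assert (F_mono : forall T1 T2, 0 <= T1 <= T2 -> F T1 <= F T2).
  { intros T1 T2 HT; unfold F.
    rewrite <- (RInt_Chasles h (- T2) (- T1) T2) by (apply Hint; lra).
    rewrite <- (RInt_Chasles h (- T1) T1 T2) by (apply Hint; lra).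
    assert (0 <= RInt h (- T2) (- T1)) by (apply RInt_ge_0; auto; [lra | apply Hint; lra]).
    assert (0 <= RInt h T1 T2) by (apply RInt_ge_0; auto; [lra | apply Hint; lra]).
    unfold plus; simpl; lra. }
  set (E := fun x => exists T, 0 <= T /\ x = F T).
  destruct (completeness E) as [p [Hub Hlub]].
  - exists C; intros x [T [HT ->]]; apply Hbound, HT.
  - exists (F 0); unfold E; exists 0; split; [lra | reflexivity].
  - exists p; intros eps Heps.
    assert (close : exists T0, 0 <= T0 /\ p - eps < F T0).
    { apply NNPP; intro none.
      assert (p <= p - eps); [|lra].
      apply Hlub; intros x [T [HT ->]]; apply Rnot_lt_le; eauto. }
    destruct close as [T0 [HT0 HF0]].
    exists T0; split; auto; intros T HT.
    assert (F T0 <= F T) by (apply F_mono; lra).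
    assert (F T <= p) by (apply Hub; unfold E; exists T; split; [lra | reflexivity]).
    apply Rabs_def1; fold (F T); lra.
Qed.

Lemma is_prob_exists n th A C :
  (forall a b, a <= b -> ex_RInt (fun y => ybar_density n th y * ind A y) a b) ->
  (forall T, 0 <= T -> RInt (fun y => ybar_density n th y * ind A y) (- T) T <= C) ->
  exists p, is_prob n th A p.
Proof.
  intros Hint Hbound.
  assert (Hpos : forall y, 0 <= ybar_density n th y * ind A y).
  { intro y; apply Rmult_le_pos; [|apply ind_bounds].
    apply Rmult_le_pos; [apply sqrt_pos | left; apply exp_pos]. }
  destruct (RInt_symmetric_cv_of_bounded _ C Hpos Hint Hbound) as [p Hp].
  exists p; intros eps Heps.
  destruct (Hp eps Heps) as [T0 [HT0 HT]].
  exists T0; intros T HT0T.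
  exists (ex_RInt_Reals_0 _ _ _ (Hint (- T) T ltac:(lra))).
  rewrite <- RInt_Reals; auto.
Qed.

Lemma is_prob_le n th A p C : is_prob n th A p ->
  (forall T, 0 <= T -> RInt (fun y => ybar_density n th y * ind A y) (- T) T <= C) ->
  p <= C.
Proof.
  intros Hp Hbound; apply Rnot_lt_le; intro HCp.
  destruct (Hp (p - C) ltac:(lra)) as [T0 HT0].
  destruct (HT0 (Rmax T0 0) (Rmax_l _ _)) as [pr Hpr].
  rewrite <- RInt_Reals in Hpr.
  pose proof (Hbound (Rmax T0 0) (Rmax_r _ _)).
  apply Rabs_def2 in Hpr; lra.
Qed.

Lemma Prob_le n th A C :
  (forall a b, a <= b -> ex_RInt (fun y => ybar_density n th y * ind A y) a b) ->
  (forall T, 0 <= T -> RInt (fun y => ybar_density n th y * ind A y) (- T) T <= C) ->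
  Prob n th A <= C.
Proof.
  intros Hint Hbound.
  apply (is_prob_le n th A _ C); auto.
  exact (epsilon_spec (inhabits 0) _ (is_prob_exists n th A C Hint Hbound)).
Qed.

Lemma ybar_density_le_laplace n th t y : 0 < t -> t < sqrt (INR n) * Rabs (y - th) ->
  ybar_density n th y <=
    sqrt (INR n / (2 * PI)) * exp (- (t * sqrt (INR n) / 2 * Rabs (y - th))).
Proof.
  intros Ht Hy; unfold ybar_density.
  apply Rmult_le_compat_l; [apply sqrt_pos | apply exp_le].
  assert (Hsq : INR n * (y - th) ^ 2 = (sqrt (INR n) * Rabs (y - th)) ^ 2).
  { rewrite Rpow_mult_distr, pow2_abs, pow2_sqrt by apply pos_INR; reflexivity. }
  rewrite Hsq; nra.
Qed.

Lemma Prob_tail_le n th A t : (1 <= n)%nat -> 0 < t ->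
  (forall a b, a <= b -> ex_RInt (fun y => ybar_density n th y * ind A y) a b) ->
  (forall y, A y -> t < sqrt (INR n) * Rabs (y - th)) ->
  Prob n th A <= 4 / t.
Proof.
  intros Hn Ht Hint HA.
  set (r := sqrt (INR n)); set (s := sqrt (INR n / (2 * PI))); set (c := t * r / 2).
  set (K := fun y => exp (- (c * Rabs (y - th)))).
  assert (Hr : 0 < r) by (apply sqrt_lt_R0, (lt_INR 0); lia).
  assert (Hsr : s <= r).
  { apply sqrt_le_1_alt; pose proof PI2_1; pose proof (pos_INR n).
    apply Rmult_le_reg_r with (2 * PI); [lra|].
    unfold Rdiv; rewrite Rmult_assoc, Rinv_l; nra. }
  assert (Hc : 0 < c) by (unfold c; nra).
  assert (HK : forall a b, ex_RInt K a b).
  { intros a b; apply (ex_RInt_continuous (V := R_CompleteNormedModule)).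
    intros; apply continuous_exp_abs. }
  apply Prob_le; auto; intros T HT.
  apply Rle_trans with (RInt (fun y => s * K y) (- T) T).
  - apply RInt_le; [lra | apply Hint; lra | apply (ex_RInt_scal (V := R_NormedModule)), HK |].
    intros y _; destruct (excluded_middle_informative (A y)) as [Ay|nAy].
    + rewrite ind_in, Rmult_1_r by auto; apply ybar_density_le_laplace; auto.
    + rewrite ind_out, Rmult_0_r by auto.
      apply Rmult_le_pos; [apply sqrt_pos | left; apply exp_pos].
  - replace (RInt (fun y => s * K y) (- T) T) with (s * RInt K (- T) T)
      by (symmetry; exact (RInt_scal (V := R_CompleteNormedModule) K (- T) T s (HK _ _))).
    apply Rle_trans with (s * (2 / c)).
    + apply Rmult_le_compat_l; [apply sqrt_pos | apply RInt_exp_abs_le; lra].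
    + unfold c; apply Rmult_le_reg_r with (t * r); [nra|].
      unfold Rdiv; field_simplify; [|lra..]. nra.
Qed.

Lemma sqrt_INR_eventually_ge B : exists N, forall n, (N <= n)%nat -> B <= sqrt (INR n).
Proof.
  destruct (INR_unbounded (B * B)) as [N HN].
  exists N; intros n Hn.
  destruct (Rle_dec B 0); [pose proof (sqrt_pos (INR n)); lra|].
  rewrite <- (sqrt_square B) by lra.
  apply sqrt_le_1_alt; apply le_INR in Hn; lra.
Qed.

Lemma thetaA_uniformly_consistent (mu : nat -> R) :
  (forall n, 0 < mu n) -> Un_cv mu 0 ->
  forall eps, 0 < eps -> forall delta, 0 < delta ->
    exists N : nat, forall n : nat, (N <= n)%nat -> (1 <= n)%nat -> forall theta : R,
      Prob n theta (fun y => eps < Rabs (thetaA (mu n) y - theta)) <= delta.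
Proof.
  intros mu_pos mu_lim eps Heps delta Hdelta.
  destruct (mu_lim (eps / 2) ltac:(lra)) as [N1 HN1].
  destruct (sqrt_INR_eventually_ge (8 / (eps * delta))) as [N2 HN2].
  exists (Nat.max N1 N2); intros n Hn Hn1 theta.
  assert (Hmu : mu n < eps / 2).
  { specialize (HN1 n ltac:(lia)); pose proof (mu_pos n); unfold Rdist in HN1.
    rewrite Rminus_0_r, Rabs_right in HN1 by lra; lra. }
  specialize (HN2 n ltac:(lia)); set (r := sqrt (INR n)) in *.
  assert (Hr : 0 < r) by (apply sqrt_lt_R0, (lt_INR 0); lia).
  apply Rle_trans with (4 / (r * (eps / 2))).
  - apply Prob_tail_le; auto; [nra| |].
    + intros a b Hab.
      apply ex_RInt_mult_ind_abs_gt; [apply continuous_ybar_density | | lra | auto].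
      intros x y Hxy; pose proof (thetaA_nondecreasing (mu n) x y (mu_pos n) Hxy); lra.
    + intros y Hy; apply Rmult_lt_compat_l; auto.
      pose proof (thetaA_dist_le (mu n) y theta (mu_pos n)); lra.
  - assert (8 <= r * (eps * delta)).
    { apply Rmult_le_compat_r with (r := eps * delta) in HN2; [|nra].
      unfold Rdiv in HN2; rewrite Rmult_assoc, Rinv_l in HN2 by nra; lra. }
    apply Rmult_le_reg_r with (r * (eps / 2)); [nra|].
    unfold Rdiv; rewrite Rmult_assoc, Rinv_l by nra; nra.
Qed.

(* [a_n mu n <= 1 / mu n] makes the bias [mu n] of [thetaA] cost at most 1 on the a_n scale. *)
Lemma thetaA_uniformly_tight (mu : nat -> R) : (forall n, 0 < mu n) ->
  forall eps, 0 < eps ->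
    exists M : R, 0 <= M /\ exists delta : R, delta < eps /\
      forall n : nat, (1 <= n)%nat -> forall theta : R,
        Prob n theta (fun y => M < a_n mu n * Rabs (thetaA (mu n) y - theta)) <= delta.
Proof.
  intros mu_pos eps Heps.
  assert (H8 : 0 < 8 / eps) by (apply Rdiv_lt_0_compat; lra).
  exists (1 + 8 / eps); split; [lra|]; exists (eps / 2); split; [lra|].
  intros n Hn theta.
  set (r := sqrt (INR n)); set (an := a_n mu n); pose proof (mu_pos n) as Hmu.
  assert (Hr : 0 < r) by (apply sqrt_lt_R0, (lt_INR 0); lia).
  assert (Han_r : an <= r) by apply Rmin_l.
  assert (Han_mu : an * mu n <= 1).
  { apply Rle_trans with (/ mu n * mu n); [apply Rmult_le_compat_r; [lra | apply Rmin_r]|].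
    rewrite Rinv_l; lra. }
  assert (Han : 0 < an) by (apply Rmin_glb_lt; [auto | apply Rinv_0_lt_compat; auto]).
  replace (eps / 2) with (4 / (8 / eps)) by (field; lra).
  apply Prob_tail_le; auto.
  - intros a b Hab.
    apply (ex_RInt_ext (fun y => ybar_density n theta y *
             ind (fun y => 1 + 8 / eps < Rabs (an * (thetaA (mu n) y - theta))) y)).
    + intros y _; f_equal; apply ind_ext.
      rewrite Rabs_mult, (Rabs_pos_eq an) by lra; reflexivity.
    + apply ex_RInt_mult_ind_abs_gt; [apply continuous_ybar_density | | lra | auto].
      intros x y Hxy; apply Rmult_le_compat_l; [lra|].
      pose proof (thetaA_nondecreasing (mu n) x y Hmu Hxy); lra.
  - intros y Hy.
    pose proof (thetaA_dist_le (mu n) y theta Hmu).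
    pose proof (Rabs_pos (y - theta)).
    assert (an * Rabs (thetaA (mu n) y - theta) <= an * (Rabs (y - theta) + mu n))
      by (apply Rmult_le_compat_l; lra).
    assert (an * Rabs (y - theta) <= r * Rabs (y - theta)) by (apply Rmult_le_compat_r; lra).
    fold an in Hy; fold r; nra.
Qed.

Theorem theorem1 (mu : nat -> R) (mu_pos : forall n, 0 < mu n)
  (mu_lim : Un_cv mu 0) :
  (forall eps, 0 < eps ->
     forall delta, 0 < delta ->
       exists N : nat, forall n : nat, (N <= n)%nat -> (1 <= n)%nat ->
         forall theta : R,
           Prob n theta (fun y => eps < Rabs (thetaA (mu n) y - theta)) <= delta)
  /\
  (forall eps, 0 < eps ->
     exists M : R, 0 <= M /\
       exists delta : R, delta < eps /\
         forall n : nat, (1 <= n)%nat -> forall theta : R,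
           Prob n theta
             (fun y => M < a_n mu n * Rabs (thetaA (mu n) y - theta)) <= delta).
Proof.
  split.
  - exact (thetaA_uniformly_consistent mu mu_pos mu_lim).
  - exact (thetaA_uniformly_tight mu mu_pos).
Qed.
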